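(* Let $\Bbbk$ be a field and $q\in\Bbbk$ with $[m]_q:=1+q+\cdots+q^{m-1}\ne0$ for all $m\ge1$; put $[k]_q!=[1]_q\cdots[k]_q$. Let $f(t)=\sum_{k\ge0}\frac{t^k}{[k]_q!}$, so $a_k=1/[k]_q!$. Then for all $k\ge1$, $$P_{f,k}(t)=\frac{(t-1)(t-q)\cdots(t-q^{k-1})}{[k]_q!},$$ where $P_{f,k}(t)=(-1)^k\det\begin{pmatrix} 1&a_1t&\ldots &a_kt^k\\ 1&a_1&\ldots &a_k\\ 0&1&\ldots &a_{k-1}\\ \vdots&\ddots&\ddots&\vdots\\ 0&\ldots &1&a_1 \end{pmatrix}$.
   Context: The determinant is $(k+1)\times(k+1)$: first row $(1,a_1t,\dots,a_kt^k)$, second row $(1,a_1,\dots,a_k)$, row $r\ge3$ has zeros in its first $r-2$ entries, $1$ in entry $r-1$, then $a_1,a_2,\dots$. *)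

From HB Require Import structures.
From mathcomp Require Import all_boot all_order all_algebra.
Set Implicit Arguments. Unset Strict Implicit. Unset Printing Implicit Defensive.
Import GRing.Theory.
Local Open Scope ring_scope.

Definition qint (K : fieldType) (q : K) (m : nat) : K := \sum_(i < m) q ^+ i.

Definition qfact (K : fieldType) (q : K) (k : nat) : K :=
  \prod_(i < k) qint q i.+1.

(* The (k+1)x(k+1) matrix: row 0 = (a_0, a_1 t, ..., a_k t^k) (a_0 = 1 here),
   row i >= 1 has entry a_(j+1-i) at column j when j+1 >= i, and 0 otherwise.
   (Row 1 is (a_0, a_1, ..., a_k); row i >= 2 has a_0 = 1 at column i-1.) *)
Definition Pmat (K : fieldType) (a : nat -> K) (k : nat) : 'M[{poly K}]_(k.+1) :=
  \matrix_(i < k.+1, j < k.+1)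
    if i == 0 :> nat then (a j)%:P * 'X^j
    else if (i <= j.+1)%N then (a (j.+1 - i)%N)%:P else 0.

Definition Pfk (K : fieldType) (a : nat -> K) (k : nat) : {poly K} :=
  (-1) ^+ k * \det (Pmat a k).

From HB Require Import structures.
From mathcomp Require Import all_boot all_order all_algebra.
From mathcomp Require Import ring.
Set Implicit Arguments. Unset Strict Implicit.
Import GRing.Theory.
Local Open Scope ring_scope.

(* Subtracting from the first row of [Pmat a k] the combination
   [sum_(c < k) p_c * row_(c+1)] leaves [p_k] in the last column alone,
   provided the polynomials [p_c] solve the triangular system
   [a_j t^j = sum_(c <= j) p_c a_(j-c)]; hence [P_{f,k} = p_k].  For
   [a_j = 1/[j]_q!] the solution is [p_c = (t-1)...(t-q^(c-1)) / [c]_q!]: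
   this is the q-analogue of Newton's expansion of [t^j] in the binomial
   polynomials, proved by induction on [j] from
   [t p_c = [c+1]_q p_(c+1) + q^c p_c] and [[j+1]_q = [c]_q + q^c [j+1-c]_q]. *)

Section TriangularSolution.
Variables (K : fieldType) (a : nat -> K) (p : nat -> {poly K}).
Hypothesis a0 : a 0 = 1.
Hypothesis expansion : forall j,
  (a j)%:P * 'X^j = \sum_(c < j.+1) p c * (a (j - c))%:P.
Variable k : nat.

Definition Pmat_elim : 'M[{poly K}]_(k.+1) := \matrix_(i < k.+1, c < k.+1)
  if i == 0 :> nat then (if c == 0 :> nat then 1 else p c.-1) else (i == c)%:R.

Definition Pmat_reduced : 'M[{poly K}]_(k.+1) := \matrix_(i < k.+1, j < k.+1)
  if i == 0 :> nat then (if j == k :> nat then p k else 0) else Pmat a k i j.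

Lemma det_Pmat_elim : \det Pmat_elim = 1.
Proof.
rewrite -det_tr det_trig; last first.
  apply/is_trig_mxP => i j lt_ij; rewrite !mxE.
  have -> : (j == 0 :> nat) = false by case: (nat_of_ord j) lt_ij.
  by rewrite -val_eqE /= gtn_eqF.
by apply: big1 => i _; rewrite !mxE; case: ifP => [/eqP -> //|]; rewrite eqxx.
Qed.

Lemma det_Pmat_reduced : \det Pmat_reduced = (-1) ^+ k * p k.
Proof.
rewrite (expand_det_row _ ord0) (bigD1 ord_max) //= big1 ?addr0; last first.
  move=> j j_neq_k; rewrite !mxE /= ifF ?mul0r //.
  by apply: contraNF j_neq_k => /eqP j_eq_k; apply/eqP/val_inj.
rewrite !mxE /= eqxx /cofactor add0n mulrCA; congr (_ * _).
rewrite -det_tr det_trig; last first.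
  apply/is_trig_mxP => i j lt_ij; rewrite !mxE lift0 lift_max /=.
  by rewrite ltnS leqNgt lt_ij.
rewrite big1 ?mulr1 // => i _.
by rewrite !mxE lift0 lift_max /= ltnS leqnn subSS subnn a0.
Qed.

Lemma Pmat_factor : Pmat a k = Pmat_elim *m Pmat_reduced.
Proof.
apply/matrixP => i j; rewrite !mxE.
have [i0 | i_neq0] := eqVneq (nat_of_ord i) 0; last first.
  rewrite (bigD1 i) //= big1 ?addr0 => [|c c_neq_i].
    by rewrite !mxE (negbTE i_neq0) eqxx mul1r.
  by rewrite !mxE (negbTE i_neq0) eq_sym (negbTE c_neq_i) mul0r.
have -> : i = ord0 by apply: val_inj.
rewrite big_ord_recl !mxE /= mul1r expansion.
rewrite (big_ord_widen _ (fun c => p c * (a (j - c))%:P) (ltn_ord j)).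
rewrite big_mkcond /= big_ord_recr /= addrC; congr (_ + _).
  have [j_eq_k | j_neq_k] := eqVneq (nat_of_ord j) k.
    by rewrite j_eq_k ltnSn subnn a0 mulr1.
  have j_lt_k : (j < k)%N by rewrite ltn_neqAle j_neq_k -ltnS ltn_ord.
  by rewrite ltnS leqNgt j_lt_k.
apply: eq_bigr => c _; rewrite !mxE lift0 /= !ltnS subSS.
by case: ifP => _; rewrite ?mulr0.
Qed.

Lemma Pfk_triangular_solution : Pfk a k = p k.
Proof.
rewrite /Pfk Pmat_factor det_mulmx det_Pmat_elim det_Pmat_reduced mul1r.
by rewrite mulrA -exprD -signr_odd oddD addbb mul1r.
Qed.

End TriangularSolution.

Section QNewton.
Variables (K : fieldType) (q : K).

Lemma qint0 : qint q 0 = 0.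
Proof. by rewrite /qint big_ord0. Qed.

Lemma qintD m n : qint q (m + n) = qint q m + q ^+ m * qint q n.
Proof.
rewrite /qint big_split_ord /= big_distrr /=; congr (_ + _).
by apply: eq_bigr => i _; rewrite exprD.
Qed.

Lemma qfactS m : qfact q m.+1 = qfact q m * qint q m.+1.
Proof. by rewrite /qfact big_ord_recr. Qed.

Definition inv_qfact m := (qfact q m)^-1.

Definition qchoose c : {poly K} :=
  (inv_qfact c)%:P * \prod_(i < c) ('X - (q ^+ i)%:P).

Lemma inv_qfact0 : inv_qfact 0 = 1.
Proof. by rewrite /inv_qfact /qfact big_ord0 invr1. Qed.

Hypothesis qint_neq0 : forall m : nat, (0 < m)%N -> qint q m != 0.

Lemma qint_inv_qfactS m : qint q m.+1 * inv_qfact m.+1 = inv_qfact m.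
Proof.
by rewrite /inv_qfact qfactS invfM mulrCA mulfV ?mulr1 // qint_neq0.
Qed.

Lemma mulX_qchoose c :
  'X * qchoose c = (qint q c.+1)%:P * qchoose c.+1 + (q ^+ c)%:P * qchoose c.
Proof.
rewrite /qchoose big_ord_recr /= -(qint_inv_qfactS c) !polyCM.
set Q := \prod_(i < c) _; ring.
Qed.

Lemma qnewton_expansion j :
  (inv_qfact j)%:P * 'X^j =
    \sum_(c < j.+1) qchoose c * (inv_qfact (j - c))%:P.
Proof.
elim: j => [|j IH].
  by rewrite big_ord1 /qchoose big_ord0 !inv_qfact0 expr0 !mulr1.
have qint_neq0P : (qint q j.+1)%:P != 0 :> {poly K} by rewrite polyC_eq0 qint_neq0.
apply: (mulfI qint_neq0P).
have -> : (qint q j.+1)%:P * ((inv_qfact j.+1)%:P * 'X^(j.+1)) =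
          'X * ((inv_qfact j)%:P * 'X^j).
  by rewrite -(qint_inv_qfactS j) polyCM exprS; ring.
have split_qint (c : 'I_j.+2) :
    qint q j.+1 = qint q c + q ^+ c * qint q (j.+1 - c).
  by rewrite -qintD subnKC // -ltnS.
rewrite IH big_distrr /= big_distrr /=.
under eq_bigr do rewrite mulrA mulX_qchoose mulrDl.
under [in RHS]eq_bigr => c _ do rewrite (split_qint c) polyCD mulrDl.
rewrite !big_split /=; congr (_ + _).
  rewrite [in RHS]big_ord_recl /= qint0 !mul0r add0r.
  by apply: eq_bigr => c _; rewrite subSS -!mulrA.
rewrite [in RHS]big_ord_recr /= subnn qint0 mulr0 mul0r addr0.
apply: eq_bigr => c _; rewrite subSn ?leq_ord //.
by rewrite -[inv_qfact (j - c)](qint_inv_qfactS (j - c)) polyCM; ring.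
Qed.

End QNewton.

Theorem proposition2p4 (K : fieldType) (q : K)
  (hq : forall m : nat, (0 < m)%N -> qint q m != 0) (k : nat) :
  (1 <= k)%N ->
  Pfk (fun n => (qfact q n)^-1) k =
    ((qfact q k)^-1)%:P * \prod_(i < k) ('X - (q ^+ i)%:P).
Proof.
move=> _. (* the identity holds for [k = 0] as well *)
exact: (Pfk_triangular_solution (inv_qfact0 q) (qnewton_expansion hq)).
Qed.
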